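(* Let $W$ be a layered wheel with rooted tree $T$, let $n\ge8$ be an integer and let $G$ be an $n$-vertex induced subgraph of $W$. Then either (i) there is some $u\in V(T)$ with at least $\frac n{16}$ and at most $\frac n4$ descendants in $V(G)$, such that every node $v\in V(T)$ in the same layer as $u$ has at most $\frac n4$ descendants in $V(G)$; or (ii) there is some $u\in V(T)$ and a child $u^+$ of $u$ such that the total number of descendants in $V(G)$ of all children of $u$ that lie strictly to the right of the leftmost child of $u$ and strictly to the left of $u^+$ is at least $\frac n{16}$ and at most $\frac n8$.
   Context: A layered wheel is a countably infinite graph $W$ on the same vertex set as a countably infinite, locally finite rooted tree $T$ embedded in the plane, such that: (1) for every natural number $n$, the set $L_n$ (layer) of nodes at distance $n$ from the root induces in $W$ a finite path visiting $L_n$ in the left-to-right order of the embedding (this order also orders the children of each node from left to right); edges inside layers form the set $E_L$; (2) every edge not in $E_L$ joins two nodes in ancestor–descendant relation in $T$; (3) there is a finite bound on the length of paths in $T$ consisting only of degree-$2$ nodes of $T$. A node is its own ancestor and descendant. *)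

From mathcomp Require Import all_boot.
Set Implicit Arguments. Unset Strict Implicit. Unset Printing Implicit Defensive.

(* A countably infinite, locally finite rooted tree embedded in the plane,
   given up to isomorphism by its layers: layer [k] has [lsize k] nodes,
   numbered 0,...,lsize k - 1 from left to right; node (k, i) is the pair
   (layer, index).  For a node i of layer k+1, [par k i] is the index of its
   parent in layer k. *)
Record ptree := PTree { lsize : nat -> nat; par : nat -> nat -> nat }.

Definition vertex := (nat * nat)%type.

Definition valid (T : ptree) (v : vertex) : bool := v.2 < lsize T v.1.

(* Well-formedness: a single root, every layer nonempty (the tree is infinite;
   layers are finite, i.e. the tree is locally finite), parents lie in the
   previous layer, and the plane embedding: the left-to-right order of a layer
   is compatible with the left-to-right order of the parents. *)
Definition is_ptree (T : ptree) : Prop :=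
  [/\ lsize T 0 = 1,
      (forall k, 0 < lsize T k),
      (forall k i, i < lsize T k.+1 -> par T k i < lsize T k)
    & (forall k i j, i <= j -> j < lsize T k.+1 -> par T k i <= par T k j)].

Fixpoint up (T : ptree) (k i d : nat) {struct d} : nat :=
  match d with
  | 0 => i
  | d'.+1 => match k with 0 => i | k'.+1 => up T k' (par T k' i) d' end
  end.

(* u is an ancestor of v (a node is its own ancestor). *)
Definition anc (T : ptree) (u v : vertex) : bool :=
  (u.1 <= v.1) && (up T v.1 v.2 (v.1 - u.1) == u.2).

Definition tadj (T : ptree) (u v : vertex) : bool :=
  valid T u && valid T v &&
  (((u.1 == v.1.+1) && (par T v.1 u.2 == v.2)) ||
   ((v.1 == u.1.+1) && (par T u.1 v.2 == u.2))).

Definition tdeg (T : ptree) (v : vertex) : nat :=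
  count (fun j => par T v.1 j == v.2) (iota 0 (lsize T v.1.+1)) + (v.1 != 0).

Definition deg2_path (T : ptree) (p : seq vertex) : bool :=
  uniq p && all (valid T) p && all (fun v => tdeg T v == 2) p &&
  (if p is x :: q then path (tadj T) x q else true).

Definition layered_wheel (T : ptree) (W : vertex -> vertex -> Prop) : Prop :=
  is_ptree T /\
  (forall u v, W u v -> valid T u /\ valid T v) /\
  (forall u v, W u v -> W v u) /\
  (forall u, ~ W u u) /\
  (forall k i j, i < lsize T k -> j < lsize T k ->
      (W (k, i) (k, j) <-> (i.+1 = j \/ j.+1 = i))) /\
  (forall u v, W u v -> u.1 <> v.1 -> anc T u v \/ anc T v u) /\
  (exists B, forall p, deg2_path T p -> size p <= B).

Definition ndesc (T : ptree) (s : seq vertex) (u : vertex) : nat :=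
  count (anc T u) s.

From mathcomp Require Import all_boot zify.

(* Only the tree T matters.  Take a deepest
   layer k containing a node j with more than n/4 descendants in G; by
   maximality every node of layer k+1 has at most n/4 of them.  If some child
   of j has at least n/16, it satisfies (i).  Otherwise all children of j are
   light; they form an interval c0..cl of layer k+1 (the embedding is planar)
   and together carry almost all descendants of j, so even without the two
   extreme children they carry at least n/16.  Growing a window of children
   from c0+1 until it first reaches n/16 overshoots by less than one light
   child, so it stops below n/8, giving (ii). *)

Lemma count_sum (X : Type) (a : pred X) (r : seq X) :
  count a r = \sum_(x <- r) (a x : nat).
Proof. by rewrite -sum1_count big_mkcond. Qed.

Lemma prefix_sum_crossing {f : nat -> nat} {a b m M : nat} :
  0 < a -> (forall i, m <= i < M -> f i <= b) ->
  a <= \sum_(m <= i < M) f i ->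
  exists c, m < c <= M /\ a <= \sum_(m <= i < c) f i < a + b.
Proof.
move=> a_gt0 f_le; elim: M f_le => [|M IHM] f_le sum_ge.
  by move: sum_ge; rewrite big_geq //; lia.
have [lt_Mm | le_mM] := ltnP M m.
  by move: sum_ge; rewrite big_geq //; lia.
move: sum_ge; rewrite big_nat_recr //= => sum_ge.
have [le_aS | lt_Sa] := leqP a (\sum_(m <= i < M) f i).
  have [|c [c_range c_sum]] := IHM _ le_aS; first by move=> i ?; apply: f_le; lia.
  by exists c; split => //; lia.
by exists M.+1; rewrite big_nat_recr //=; have := f_le M ltac:(lia); lia.
Qed.

Section Tree.

Context {T : ptree}.
Hypothesis T_ok : is_ptree T.

Lemma up_succ (m i d : nat) :
  d < m -> up T m i d.+1 = par T (m - d.+1) (up T m i d).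
Proof.
elim: d m i => [|d IHd] [|m] i //= lt_dm; first by rewrite subn1.
by rewrite -[up T m _ d]/(up T m.+1 i d.+1) -IHd ?subSS //; lia.
Qed.

Lemma up_valid {m i d : nat} :
  i < lsize T m -> d <= m -> up T m i d < lsize T (m - d).
Proof.
case: T_ok => _ _ par_valid _.
elim: d m i => [|d IHd] [|m] i //= i_valid le_dm.
by rewrite subSS; apply: IHd => //; apply: par_valid.
Qed.

Lemma anc_child {k j : nat} {v : vertex} :
  valid T v -> anc T (k, j) v -> v != (k, j) ->
  exists i, [/\ i < lsize T k.+1, par T k i = j & anc T (k.+1, i) v].
Proof.
case: v => [a b] /= v_valid /andP[/= le_ka /eqP up_kj] ne_v.
have lt_ka : k < a.
  rewrite ltn_neqAle le_ka andbT; apply: contraNneq ne_v => eq_ka.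
  by move: up_kj; rewrite -eq_ka subnn /= => ->.
exists (up T a b (a - k.+1)); split.
- by have := up_valid v_valid (leq_subr k.+1 a); rewrite subKn.
- have layer_k : a - (a - k.+1).+1 = k by lia.
  have depth : (a - k.+1).+1 = a - k by lia.
  by rewrite -{1}layer_k -up_succ ?depth //; lia.
- by rewrite /anc /= lt_ka eqxx.
Qed.

Lemma children_interval (k j : nat) :
  (exists2 i, i < lsize T k.+1 & par T k i = j) ->
  exists c0 cl, cl < lsize T k.+1 /\
    forall i, i < lsize T k.+1 -> (par T k i == j) = (c0 <= i <= cl).
Proof.
case: T_ok => _ _ _ par_mono [i0 i0_valid par_i0].
have is_child : exists i, (i < lsize T k.+1) && (par T k i == j).
  by exists i0; rewrite i0_valid par_i0 eqxx.
have child_bounded i : (i < lsize T k.+1) && (par T k i == j) -> i <= lsize T k.+1.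
  by case/andP=> /ltnW.
case: (ex_minnP is_child) => c0 /andP[c0_valid /eqP par_c0] c0_min.
case: (ex_maxnP is_child child_bounded) => cl /andP[cl_valid /eqP par_cl] cl_max.
exists c0, cl; split => // i i_valid.
apply/idP/idP => [par_i | /andP[le_c0i le_icl]].
  by rewrite c0_min ?cl_max // i_valid.
by rewrite eqn_leq -{1}par_cl -{1}par_c0 !par_mono.
Qed.

Lemma anc_le_children (k j : nat) (v : vertex) : valid T v ->
  anc T (k, j) v <=
    (v == (k, j)) + \sum_(0 <= i < lsize T k.+1 | par T k i == j) anc T (k.+1, i) v.
Proof.
move=> v_valid; have [anc_v|] := boolP (anc T (k, j) v); last by [].
have [->|ne_v] := eqVneq v (k, j); first by rewrite leq_addr.
have [i [i_valid par_i anc_i]] := anc_child v_valid anc_v ne_v.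
rewrite add0n big_mkcond (bigD1_seq i) ?mem_index_iota ?iota_uniq //=.
by rewrite par_i eqxx anc_i.
Qed.

Lemma ndesc_le_children (s : seq vertex) (k j : nat) :
  uniq s -> all (valid T) s ->
  ndesc T s (k, j) <=
    1 + \sum_(0 <= i < lsize T k.+1 | par T k i == j) ndesc T s (k.+1, i).
Proof.
move=> s_uniq s_valid.
have count_kj : count (pred1 (k, j)) s <= 1 by rewrite count_uniq_mem // leq_b1.
apply: leq_trans (leq_add count_kj (leqnn _)).
rewrite /ndesc; under eq_bigr do rewrite count_sum.
rewrite exchange_big /= !count_sum -big_split /= big_seq [leqRHS]big_seq.
by apply: leq_sum => v v_in; apply: anc_le_children; apply: (allP s_valid).
Qed.

Lemma ndesc_root (s : seq vertex) : all (valid T) s -> ndesc T s (0, 0) = size s.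
Proof.
move=> s_valid; apply/eqP; rewrite /ndesc -all_count.
apply/allP => -[a b] /(allP s_valid) v_valid; rewrite /anc /= subn0.
have := up_valid v_valid (leqnn a); rewrite subnn.
by case: T_ok => -> _ _ _; rewrite ltnS leqn0.
Qed.

End Tree.

Lemma ndesc_below (T : ptree) (s : seq vertex) (k j : nat) :
  (forall v, v \in s -> v.1 < k) -> ndesc T s (k, j) = 0.
Proof.
move=> s_above; apply/eqP; rewrite -leqn0 leqNgt -has_count.
by apply/hasPn => v /s_above lt_vk; rewrite /anc /= leqNgt lt_vk.
Qed.

Lemma sum_nat_interval {P : pred nat} {L c0 cl : nat} (F : nat -> nat) :
  cl < L -> (forall i, i < L -> P i = (c0 <= i <= cl)) ->
  \sum_(0 <= i < L | P i) F i = \sum_(c0 <= i < cl.+1) F i.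
Proof.
move=> lt_clL P_interval.
rewrite [RHS](big_nat_widen _ _ _ _ _ lt_clL) [RHS](big_nat_widenl _ _ _ _ _ (leq0n c0)).
by apply: congr_big_nat => // i /andP[_ lt_iL]; rewrite P_interval // andbC.
Qed.

Lemma lowest_heavy_node {T : ptree} {s : seq vertex} :
  is_ptree T -> all (valid T) s -> 0 < size s ->
  exists k j, [/\ j < lsize T k, size s < 4 * ndesc T s (k, j) &
    forall i, i < lsize T k.+1 -> 4 * ndesc T s (k.+1, i) <= size s].
Proof.
move=> T_ok s_valid s_nonempty.
pose heavy k := has (fun j => size s < 4 * ndesc T s (k, j)) (iota 0 (lsize T k)).
have heavy_root : exists k, heavy k.
  exists 0; apply/hasP; exists 0; first by case: T_ok => -> *.
  by rewrite ndesc_root //; lia.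
have heavy_bounded k : heavy k -> k <= \max_(v <- s) v.1.
  case/hasP=> j _; apply: contraTT; rewrite -ltnNge => lt_max_k.
  rewrite ndesc_below ?muln0 // => v v_in.
  by apply: leq_ltn_trans lt_max_k; apply: leq_bigmax_seq.
case: (ex_maxnP heavy_root heavy_bounded) => k /hasP[j j_valid heavy_j] k_max.
exists k, j; split => [|//|i i_valid]; first by rewrite mem_iota in j_valid.
rewrite leqNgt; apply/negP => heavy_i.
suff : k.+1 <= k by rewrite ltnn.
by apply: k_max; apply/hasP; exists i; rewrite ?mem_iota.
Qed.

Lemma light_children_window {T : ptree} {s : seq vertex} {k j : nat} :
  is_ptree T -> uniq s -> all (valid T) s -> 8 <= size s ->
  size s < 4 * ndesc T s (k, j) ->
  (forall i, i < lsize T k.+1 -> par T k i = j -> 16 * ndesc T s (k.+1, i) < size s) ->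
  exists c c0,
     c < lsize T k.+1 /\ par T k c = j /\
     c0 < lsize T k.+1 /\ par T k c0 = j /\
     (forall i, i < c0 -> par T k i <> j) /\
     size s <= 16 * (\sum_(c0.+1 <= i < c | par T k i == j) ndesc T s (k.+1, i)) /\
     8 * (\sum_(c0.+1 <= i < c | par T k i == j) ndesc T s (k.+1, i)) <= size s.
Proof.
move=> T_ok s_uniq s_valid ge8 heavy_j light_child.
have := ndesc_le_children T_ok s k j s_uniq s_valid.
set n := size s in ge8 heavy_j light_child *.
set L := lsize T k.+1 in light_child *.
move=> j_le_children.
have has_child : exists2 i, i < L & par T k i = j.
  have [/hasP[i]|no_child] := boolP (has (fun i => par T k i == j) (iota 0 L)).
    by rewrite mem_iota => /andP[_ i_L] /eqP; exists i.
  move: j_le_children; rewrite big_nat_cond big_pred0 => [|i]; first by lia.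
  by apply: contraNF no_child => /andP[i_range par_i]; apply/hasP; exists i; rewrite ?mem_iota.
have [c0 [cl [lt_clL child_interval]]] := children_interval T_ok k j has_child.
have {}light_child i : c0 <= i <= cl -> 16 * ndesc T s (k.+1, i) < n.
  by move=> i_between; apply: light_child; [lia | apply/eqP; rewrite child_interval //; lia].
have [i0 i0_L par_i0] := has_child.
have le_c0cl : c0 <= cl.
  by move: (child_interval i0 i0_L); rewrite par_i0 eqxx => /esym/andP[]; apply: leq_trans.
rewrite (sum_nat_interval _ lt_clL child_interval) in j_le_children.
have lt_c0cl : c0 < cl.
  rewrite ltn_neqAle le_c0cl andbT; apply/eqP => eq_c0cl.
  by move: j_le_children; rewrite -eq_c0cl big_nat1; have := light_child c0; lia.
rewrite big_ltn // big_nat_recr //= in j_le_children.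
have interior_heavy : n <= \sum_(c0.+1 <= i < cl) 16 * ndesc T s (k.+1, i).
  by rewrite -big_distrr /=; have := light_child c0; have := light_child cl; lia.
have [||c [c_range window]] := prefix_sum_crossing (b := n) _ _ interior_heavy.
- by lia.
- by move=> i i_range; apply: ltnW; apply: light_child; lia.
have children_only : \sum_(c0.+1 <= i < c | par T k i == j) ndesc T s (k.+1, i) =
                     \sum_(c0.+1 <= i < c) ndesc T s (k.+1, i).
  by apply: congr_big_nat => // i /andP[lt_c0i lt_ic]; rewrite child_interval; lia.
rewrite -big_distrr /= in window.
exists c, c0; rewrite children_only; do ![split; try lia].
- by apply/eqP; rewrite child_interval; lia.
- by apply/eqP; rewrite child_interval; lia.
- by move=> i lt_ic0 /eqP; rewrite child_interval; lia.
Qed.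

Theorem lemma5p1 (T : ptree) (W : vertex -> vertex -> Prop) (n : nat)
    (s : seq vertex) :
  layered_wheel T W -> 8 <= n ->
  uniq s -> all (valid T) s -> size s = n ->
  (exists u : vertex, valid T u /\
     n <= 16 * ndesc T s u /\ 4 * ndesc T s u <= n /\
     (forall j, j < lsize T u.1 -> 4 * ndesc T s (u.1, j) <= n))
  \/
  (exists (k j c c0 : nat),
     j < lsize T k /\
     c < lsize T k.+1 /\ par T k c = j /\
     c0 < lsize T k.+1 /\ par T k c0 = j /\
     (forall i, i < c0 -> par T k i <> j) /\
     n <= 16 * (\sum_(c0.+1 <= i < c | par T k i == j) ndesc T s (k.+1, i)) /\
     8 * (\sum_(c0.+1 <= i < c | par T k i == j) ndesc T s (k.+1, i)) <= n).
Proof.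
move=> [T_ok _] ge8 s_uniq s_valid size_s; subst n.
have [|k [j [j_valid heavy_j lowest]]] := lowest_heavy_node T_ok s_valid; first by lia.
pose heavy_child i := (par T k i == j) && (size s <= 16 * ndesc T s (k.+1, i)).
have [/hasP[i] | /hasPn light] := boolP (has heavy_child (iota 0 (lsize T k.+1))).
  rewrite mem_iota => /andP[_ i_valid] /andP[_ heavy_i].
  by left; exists (k.+1, i); do ?split; try apply: lowest.
right; have [|c [c0 window]] := light_children_window T_ok s_uniq s_valid ge8 heavy_j.
  by move=> i i_valid par_i; move: (light i); rewrite mem_iota /heavy_child par_i eqxx; lia.
by exists k, j, c, c0.
Qed.
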